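(* Let $A_q$ be the set of polynomials $F\in\mathbb{Q}(q)[x]$ such that $F([n]_q)\in\mathbb{Z}[q,q^{-1}]$ for all integers $n\ge0$. For $k\ge0$ let $$B_k(x)=\frac{\prod_{j=1}^{k}\big([j]_q+q^jx\big)}{[k]!_q}.$$ Then the polynomials $B_k$, $k\ge0$, form a basis of $A_q$ as a module over $\mathbb{Z}[q,q^{-1}]$.
   Context: $q$ is an indeterminate; $[n]_q=(q^n-1)/(q-1)$ for $n\in\mathbb{Z}$ and $[k]!_q=[1]_q\cdots[k]_q$ (with $[0]!_q=1$). *)

From HB Require Import structures.
From mathcomp Require Import all_boot all_order all_algebra fraction.
Set Implicit Arguments. Unset Strict Implicit. Unset Printing Implicit Defensive.
Import Order.TTheory GRing.Theory Num.Theory.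
Local Open Scope ring_scope.

Definition Kq : fieldType := {fraction {poly rat}}.

Definition qq : Kq := tofrac ('X : {poly rat}).

Definition qnat (n : nat) : Kq := (qq ^+ n - 1) / (qq - 1).

Definition qfact (k : nat) : Kq := \prod_(j < k) qnat j.+1.

Definition laurent (r : Kq) : Prop :=
  exists (p : {poly int}) (m : nat),
    r = tofrac (map_poly (intr : int -> rat) p) / tofrac ('X^m : {poly rat}).

Definition inAq (F : {poly Kq}) : Prop := forall n : nat, laurent F.[qnat n].

Definition Bq (k : nat) : {poly Kq} :=
  (qfact k)^-1 *: \prod_(j < k) ((qnat j.+1)%:P + qq ^+ j.+1 *: 'X).

From HB Require Import structures.
From mathcomp Require Import all_boot all_order all_algebra fraction.
From mathcomp Require Import ring.
Import Order.TTheory GRing.Theory Num.Theory.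
Set Implicit Arguments.
Unset Strict Implicit.
Unset Printing Implicit Defensive.
Local Open Scope ring_scope.

(* Evaluated at [n]_q, B_k is the Gaussian binomial [n+k choose k]_q, which
   obeys the q-Pascal rule and hence lies in Z[q,q^-1]; as deg B_k = k, the B_k
   form a Q(q)-basis of Q(q)[x].  If f(n) = F([n]_q) with F = sum_k c_k B_k,
   the q-difference (f(n+1) - f(n)) / q^(n+1) is the value sequence of
   sum_k c_(k+1) B_k at the shifted points [n+1]_q, and c_0 = f(n) minus the
   remaining terms.  By induction on the number of terms, each c_k then lies in
   every Z[q,q^-1]-submodule of Q(q) containing all values of F: taking {0}
   gives independence, and taking Z[q,q^-1] itself gives integrality of the
   coordinates of any F in A_q. *)

Section SizeBasis.

Variables (F : fieldType) (b : nat -> {poly F}).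
Hypothesis size_b : forall k, size (b k) = k.+1.

Lemma span_size_basis d (p : {poly F}) :
  (size p <= d)%N -> exists c : nat -> F, p = \sum_(k < d) c k *: b k.
Proof.
elim: d p => [|d IH] p size_p.
  exists (fun=> 0); rewrite big_ord0.
  by apply/eqP; rewrite -size_poly_eq0 -leqn0.
have bdd_neq0 : (b d)`_d != 0.
  have := lead_coefE (b d); rewrite size_b => <-.
  by rewrite lead_coef_eq0 -size_poly_eq0 size_b.
pose a := p`_d / (b d)`_d.
have [|c def_p] := IH (p - a *: b d).
  apply/leq_sizeP => j; rewrite leq_eqVlt => /predU1P[<-|ltdj].
    by rewrite coefB coefZ divfK ?subrr.
  rewrite coefB coefZ [(b d)`_j]nth_default ?size_b // mulr0 subr0.
  by move/leq_sizeP: size_p; apply.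
exists (fun k => if k == d then a else c k).
rewrite big_ord_recr /= eqxx.
under eq_bigr => i _ do rewrite (ltn_eqF (ltn_ord i)).
by rewrite -def_p subrK.
Qed.

End SizeBasis.

Lemma size_linear_poly (R : idomainType) (a b : R) :
  a != 0 -> size (b%:P + a *: 'X) = 2%N.
Proof.
move=> a_neq0; rewrite addrC -mul_polyC size_MXaddC polyC_eq0 (negbTE a_neq0).
by rewrite size_polyC a_neq0.
Qed.

Lemma qq_neq0 : qq != 0.
Proof. by rewrite /qq tofrac_eq0 -size_poly_eq0 size_polyX. Qed.

Lemma exp_qq_neq0 m : qq ^+ m != 0.
Proof. by rewrite expf_neq0 // qq_neq0. Qed.

Lemma exp_qq_sub1_neq0 m : (0 < m)%N -> qq ^+ m - 1 != 0.
Proof.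
move=> m_gt0; rewrite /qq -tofracXn -tofrac1 -tofracB tofrac_eq0.
by rewrite -size_poly_eq0 -polyC1 size_XnsubC.
Qed.

Lemma qnat_neq0 m : (0 < m)%N -> qnat m != 0.
Proof.
move=> m_gt0; rewrite /qnat mulf_neq0 ?invr_eq0 ?exp_qq_sub1_neq0 //.
by rewrite -[qq]expr1 exp_qq_sub1_neq0.
Qed.

Lemma qnatD m n : qnat (m + n) = qnat m + qq ^+ m * qnat n.
Proof.
rewrite /qnat exprD mulrA -mulrDl; congr (_ / _).
by rewrite mulrBr mulr1 [RHS]addrC addrA subrK.
Qed.

Lemma qfact_neq0 k : qfact k != 0.
Proof. by apply/prodf_neq0 => i _; apply: qnat_neq0. Qed.

Lemma qfactS k : qfact k.+1 = qfact k * qnat k.+1.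
Proof. by rewrite /qfact big_ord_recr. Qed.

Lemma size_Bq k : size (Bq k) = k.+1.
Proof.
rewrite size_scale ?invr_eq0 ?qfact_neq0 // size_prod => [|j _]; last first.
  by rewrite -size_poly_eq0 size_linear_poly ?exp_qq_neq0.
under eq_bigr do rewrite size_linear_poly ?exp_qq_neq0 //.
by rewrite sum_nat_const card_ord muln2 -addnn -addSn addnK.
Qed.

(* the Gaussian binomial [n+k choose k]_q *)
Definition qbinom n k := (Bq k).[qnat n].

Lemma qbinomE n k : qbinom n k = (qfact k)^-1 * \prod_(j < k) qnat (n + j.+1).
Proof.
rewrite /qbinom hornerZ horner_prod; congr (_ * _); apply: eq_bigr => j _.
by rewrite hornerD hornerC hornerZ hornerX addnC qnatD.
Qed.

Lemma qbinomn0 n : qbinom n 0 = 1.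
Proof. by rewrite qbinomE big_ord0 /qfact big_ord0 invr1 mulr1. Qed.

Lemma qbinom0n k : qbinom 0 k = 1.
Proof.
by rewrite qbinomE; under eq_bigr do rewrite add0n; rewrite mulVf ?qfact_neq0.
Qed.

Lemma qbinomS n k :
  qbinom n.+1 k.+1 = qbinom n k.+1 + qq ^+ n.+1 * qbinom n.+1 k.
Proof.
rewrite !qbinomE big_ord_recr big_ord_recl /=.
under [X in _ = _ * (_ * X) + _]eq_bigr do rewrite /bump add1n -addSnnS.
have -> : (qfact k)^-1 = (qfact k.+1)^-1 * qnat k.+1.
  by rewrite qfactS invfM divfK ?qnat_neq0.
rewrite qnatD addn1; ring.
Qed.

Definition intpoly_frac : {rmorphism {poly int} -> Kq} :=
  @tofrac _ \o map_poly (intr : int -> rat).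

Lemma intpoly_frac_Xn m : intpoly_frac 'X^m = qq ^+ m.
Proof. by rewrite rmorphXn /= map_polyX. Qed.

Lemma laurentP r : laurent r <-> exists p m, r * qq ^+ m = intpoly_frac p.
Proof.
split=> [[p [m ->]]|[p [m r_qm]]]; exists p, m.
  by rewrite tofracXn divfK ?exp_qq_neq0.
by rewrite tofracXn -[tofrac _]/(intpoly_frac p) -r_qm mulfK ?exp_qq_neq0.
Qed.

Lemma laurent_exp_qq n : laurent (qq ^+ n).
Proof.
by apply/laurentP; exists 'X^n, 0%N; rewrite mulr1 intpoly_frac_Xn.
Qed.

Lemma laurent_expV_qq n : laurent (qq ^+ n)^-1.
Proof. by apply/laurentP; exists 1, n; rewrite rmorph1 mulVf ?exp_qq_neq0. Qed.

Lemma laurent0 : laurent 0.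
Proof. by apply/laurentP; exists 0, 0%N; rewrite mul0r rmorph0. Qed.

Lemma laurent1 : laurent 1.
Proof. by rewrite -(expr0 qq); apply: laurent_exp_qq. Qed.

Lemma laurentD x y : laurent x -> laurent y -> laurent (x + y).
Proof.
move=> /laurentP[p [m xqm]] /laurentP[p' [m' yqm']]; apply/laurentP.
exists (p * 'X^m' + p' * 'X^m), (m + m')%N.
by rewrite rmorphD !rmorphM !intpoly_frac_Xn -xqm -yqm' exprD; ring.
Qed.

Lemma laurentM x y : laurent x -> laurent y -> laurent (x * y).
Proof.
move=> /laurentP[p [m xqm]] /laurentP[p' [m' yqm']]; apply/laurentP.
by exists (p * p'), (m + m')%N; rewrite rmorphM -xqm -yqm' exprD; ring.
Qed.

Lemma laurentN x : laurent x -> laurent (- x).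
Proof.
move=> /laurentP[p [m xqm]]; apply/laurentP.
by exists (- p), m; rewrite rmorphN -xqm mulNr.
Qed.

Lemma laurent_qbinom n k : laurent (qbinom n k).
Proof.
elim: k n => [|k IHk] n; first by rewrite qbinomn0; apply: laurent1.
elim: n => [|n IHn]; first by rewrite qbinom0n; apply: laurent1.
by rewrite qbinomS; apply: laurentD (laurentM (laurent_exp_qq _) (IHk _)).
Qed.

Definition qdiff (f : nat -> Kq) n := (qq ^+ n.+1)^-1 * (f n.+1 - f n).

Lemma qdiff_qbinom n k : qdiff (qbinom^~ k.+1) n = qbinom n.+1 k.
Proof. by rewrite /qdiff qbinomS addrC addKr mulKf ?exp_qq_neq0. Qed.

Lemma qdiff_sum_qbinom N (c : nat -> Kq) n :
  qdiff (fun m => \sum_(k < N.+1) c k * qbinom m k) n =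
  \sum_(k < N) c k.+1 * qbinom n.+1 k.
Proof.
rewrite /qdiff -sumrB mulr_sumr big_ord_recl !qbinomn0 subrr mulr0 add0r.
apply: eq_bigr => k _; rewrite lift0 -mulrBr mulrCA.
by rewrite -[_ * (_ - _)]/(qdiff (qbinom^~ k.+1) n) qdiff_qbinom.
Qed.

Lemma horner_sum_Bq N (c : nat -> Kq) n :
  (\sum_(k < N) c k *: Bq k).[qnat n] = \sum_(k < N) c k * qbinom n k.
Proof. by rewrite horner_sum; apply: eq_bigr => k _; rewrite hornerZ. Qed.

Section LaurentSubmodule.

Variable S : Kq -> Prop.
Hypotheses (S0 : S 0) (SD : forall x y, S x -> S y -> S (x + y))
  (SZ : forall a x, laurent a -> S x -> S (a * x)).

Lemma S_opp x : S x -> S (- x).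
Proof. by rewrite -mulN1r; apply: SZ; apply/laurentN/laurent1. Qed.

Lemma S_sum N (f : 'I_N -> Kq) : (forall k, S (f k)) -> S (\sum_(k < N) f k).
Proof. by move=> Sf; apply: (big_ind S) => // k _; apply: Sf. Qed.

Lemma coef_qbinom_sum N (c : nat -> Kq) a :
    (forall n, (a <= n)%N -> S (\sum_(k < N) c k * qbinom n k)) ->
  forall k, (k < N)%N -> S (c k).
Proof.
elim: N a c => [//|N IH] a c Sf.
have Sc_tail : forall k, (k < N)%N -> S (c k.+1).
  apply: (IH a.+1) => -[//|n] le_an.
  rewrite -qdiff_sum_qbinom; apply: SZ; first exact: laurent_expV_qq.
  by apply: SD; [apply: Sf; apply: leqW | apply/S_opp/Sf].
case=> [_|k]; last exact: Sc_tail.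
have -> : c 0%N = \sum_(k < N.+1) c k * qbinom a k
                  - \sum_(k < N) c k.+1 * qbinom a k.+1.
  by rewrite big_ord_recl qbinomn0 mulr1 addrK.
apply: SD; first exact: Sf.
apply/S_opp; apply: S_sum => k; rewrite mulrC.
by apply: SZ; [apply: laurent_qbinom | apply: Sc_tail].
Qed.

End LaurentSubmodule.

Theorem mainTheorem10 :
  (* each B_k lies in A_q *)
  (forall k : nat, inAq (Bq k)) /\
  (* linear independence over Z[q,q^-1] *)
  (forall (n : nat) (c : nat -> Kq),
      (forall k, laurent (c k)) ->
      \sum_(k < n) c k *: Bq k = 0 ->
      forall k, (k < n)%N -> c k = 0) /\
  (* spanning: every element of A_q is a Z[q,q^-1]-combination of the B_k *)
  (forall F : {poly Kq}, inAq F ->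
      exists (n : nat) (c : nat -> Kq),
        (forall k, laurent (c k)) /\ F = \sum_(k < n) c k *: Bq k).
Proof.
split; first by move=> k n; apply: laurent_qbinom.
split=> [N c _ sum_eq0|F F_Aq].
  apply: (@coef_qbinom_sum (eq^~ 0) _ _ _ N c 0) => [|x y -> ->|a x _ ->|n _].
  - by [].
  - by rewrite addr0.
  - by rewrite mulr0.
  - by rewrite -horner_sum_Bq sum_eq0 horner0.
have [c def_F] := span_size_basis size_Bq (leqnn (size F)).
exists (size F), (fun k => if (k < size F)%N then c k else 0); split.
  move=> k; case: ifP => [lt_kF|_]; last exact: laurent0.
  apply: (coef_qbinom_sum laurent0 laurentD laurentM (a := 0)) lt_kF => n _.
  by rewrite -horner_sum_Bq -def_F.
by rewrite {1}def_F; apply: eq_bigr => k _; rewrite ltn_ord.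
Qed.
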